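(* Let $\mathbb{E}$ be a finite-dimensional real inner product space and let $f_i:\mathbb{E}\to(-\infty,\infty]$, $i=1,\ldots,M$, be convex, directionally differentiable, continuous on their domains, with $\mathrm{dom} f_i$ closed. Suppose $F(x):=\min_{i\in[M]}f_i(x)$ is continuous on $\mathrm{dom} F$. Then for every $x\in\mathrm{dom} F$ there exists a neighborhood $\mathcal{N}$ of $x$ such that for all $y\in\mathcal{N}\cap\mathrm{dom} F$ we have $y-x\in\mathcal{F}(x;\mathrm{dom} F)$ and $$F(y)\ge F(x)+F'(x;y-x).$$
   Context: $[M]=\{1,\ldots,M\}$; $\mathrm{dom}\, g=\{x\mid g(x)<\infty\}$. For $\mathcal{C}\subset\mathbb{E}$, $x\in\mathbb{E}$: $\mathcal{F}(x;\mathcal{C})=\{d\mid \exists\varsigma'>0:\ x+\varsigma d\in\mathcal{C}\ \forall\varsigma\in(0,\varsigma')\}$ if $x\in\mathcal{C}$, and $\emptyset$ otherwise. $g$ is directionally differentiable if for every $x\in\mathrm{dom}\, g$, $d\in\mathcal{F}(x;\mathrm{dom}\, g)$ the limit $g'(x;d)=\lim_{\varsigma\searrow0}(g(x+\varsigma d)-g(x))/\varsigma$ exists in $\mathbb{R}$. *)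

From HB Require Import structures.
From mathcomp Require Import all_boot all_order all_algebra.
From mathcomp Require Import all_classical all_reals all_analysis.
Set Implicit Arguments. Unset Strict Implicit. Unset Printing Implicit Defensive.
Import Order.TTheory GRing.Theory Num.Theory.
Import numFieldNormedType.Exports.
Local Open Scope classical_set_scope.
Local Open Scope ring_scope.

Section Defs.
Variables (R : realType) (n : nat).
Notation E := 'rV[R]_n.

Definition edom (g : E -> \bar R) : set E := [set x | (g x < +oo)%E].

Definition feas_dir (C : set E) (x : E) : set E :=
  [set d | C x /\ exists2 s' : R, 0 < s' & forall s : R, 0 < s < s' -> C (x + s *: d)].

Definition econvex (g : E -> \bar R) : Prop :=
  forall (x y : E) (t : R), 0 <= t <= 1 ->
    (g ((1 - t) *: x + t *: y)%R <= (1 - t)%:E * g x + t%:E * g y)%E.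

Definition has_dir_deriv (g : E -> \bar R) (x d : E) (l : R) : Prop :=
  (fun s : R => (fine (g (x + s *: d)) - fine (g x)) / s) @ 0^'+ --> l.

Definition dir_differentiable (g : E -> \bar R) : Prop :=
  forall x d, edom g x -> feas_dir (edom g) x d -> exists l : R, has_dir_deriv g x d l.

Definition emin_fam (M : nat) (f : 'I_M -> E -> \bar R) (x : E) : \bar R :=
  \big[Order.min/+oo%E]_(i < M) f i x.

End Defs.

(* Near [x], every index [k] attaining the minimum [F z] is active at [x], i.e. [f k x = F x]:
   an inactive index whose domain contains [x] stays strictly above [F] by continuity of [f k]
   and [F], and the closed domains missing [x] are avoided near [x].  Given [y] near [x], pick
   [j] attaining [F y]; convexity of [f j] puts the segment [[x, y]] in [dom f j], a subset of
   [dom F], so [d = y - x] is feasible.  For small [s > 0] the minimizer of [F (x + s d)] is again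
   active, and [d] is feasible for it by convexity of its domain, so [F (x + s d)] is the minimum
   of [f i (x + s d)] over the active indices along which [d] is feasible; hence [F'(x; d)] is
   the minimum of the [f i'(x; d)].  Finally
   [F'(x; d) <= f j'(x; d) <= f j y - f j x = F y - F x] by convexity of [f j]. *)

From HB Require Import structures.
From mathcomp Require Import all_boot all_order all_algebra.
From mathcomp Require Import all_classical all_reals all_analysis.
From mathcomp Require Import lra.
Import Order.TTheory GRing.Theory Num.Theory.
Import numFieldNormedType.Exports.
Local Open Scope classical_set_scope.
Local Open Scope ring_scope.

Lemma nondecreasing_bigmin {d1 d2} {T1 : orderType d1} {T2 : orderType d2}
    {I : Type} {r : seq I} {P : pred I} (phi : T1 -> T2) {x : T1} {F : I -> T1} :
  {homo phi : u v / (u <= v)%O} ->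
  phi (\big[Order.min/x]_(i <- r | P i) F i) = \big[Order.min/phi x]_(i <- r | P i) phi (F i).
Proof.
move=> phi_le; apply: (big_ind2 (fun u v => phi u = v)) => // a a' b b' <- <-.
case: (leP a b) => [ab|/ltW ba]; first by rewrite !min_l ?phi_le.
by rewrite !min_r ?phi_le.
Qed.

Lemma cvg_bigmin {d} {T : orderTopologicalType d} {U : Type} {F : set_system U} {FF : Filter F}
    {I : Type} {r : seq I} {P : pred I} {g0 : U -> T} {g : I -> U -> T} {l0 : T} {l : I -> T} :
  g0 @ F --> l0 -> (forall i, P i -> g i @ F --> l i) ->
  (fun u => \big[Order.min/g0 u]_(i <- r | P i) g i u) @ F -->
    \big[Order.min/l0]_(i <- r | P i) l i.
Proof.
move=> g0l gl; elim: r => [|i r IH].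
  by under eq_fun do rewrite big_nil; rewrite big_nil.
under eq_fun do rewrite big_cons; rewrite big_cons; case: ifP => Pi //.
exact: continuous2_cvg (@min_continuous _ T (_, _)) (gl _ Pi) IH.
Qed.

Section ExtendedValued.
Context {R : realType} {n : nat}.
Implicit Types (g : 'rV[R]_n -> \bar R) (x y d : 'rV[R]_n).

Lemma fin_num_edom {g z} : (forall z, g z != -oo%E) -> edom g z -> g z \is a fin_num.
Proof. by move=> g_ninf; rewrite /edom /= fin_numE g_ninf ltey. Qed.

Lemma edom_convex g x y t : (forall z, g z != -oo%E) -> econvex g ->
  edom g x -> edom g y -> 0 <= t <= 1 -> edom g ((1 - t) *: x + t *: y).
Proof.
move=> g_ninf g_cvx gx gy t01; rewrite /edom /=.
apply: le_lt_trans (g_cvx x y t t01) _.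
rewrite -(fineK (fin_num_edom g_ninf gx)) -(fineK (fin_num_edom g_ninf gy)).
by rewrite -!EFinM -EFinD ltry.
Qed.

Lemma feas_dir_edom_convex g x d s : (forall z, g z != -oo%E) -> econvex g -> 0 < s ->
  edom g x -> edom g (x + s *: d) -> feas_dir (edom g) x d.
Proof.
move=> g_ninf g_cvx s_gt0 gx gxd; split => //; exists s => // t /andP[t_gt0 t_lts].
have -> : x + t *: d = (1 - t / s) *: x + (t / s) *: (x + s *: d).
  by rewrite scalerDr scalerA divfK ?gt_eqF // scalerBl scale1r addrA subrK.
apply: edom_convex => //.
by rewrite divr_ge0 ?ltW //= ltr_pdivrMr // mul1r.
Qed.

Lemma feas_dir_sub (A B : set 'rV[R]_n) x d : A `<=` B -> feas_dir A x d -> feas_dir B x d.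
Proof. by move=> AB [Ax [s s_gt0 As]]; split; [exact: AB | exists s => // t /As/AB]. Qed.

Lemma has_dir_deriv_le_convex {g x y l} : (forall z, g z != -oo%E) -> econvex g ->
  edom g x -> edom g y -> has_dir_deriv g x (y - x) l -> l <= fine (g y) - fine (g x).
Proof.
move=> g_ninf g_cvx gx gy gl; apply: (cvgr_to_le gl); near=> s.
have s_gt0 : 0 < s by near: s; exact: nbhs_right_gt.
have s01 : 0 <= s <= 1 by rewrite ltW //= ltW //; near: s; exact: nbhs_right_lt.
have segE : x + s *: (y - x) = (1 - s) *: x + s *: y.
  by rewrite scalerBr scalerBl scale1r addrA addrAC.
have := g_cvx x y s s01; rewrite -segE.
rewrite -(fineK (fin_num_edom g_ninf gx)) -(fineK (fin_num_edom g_ninf gy)) -!EFinM -EFinD.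
have gs : edom g (x + s *: (y - x)) by rewrite segE; exact: edom_convex.
rewrite -(fineK (fin_num_edom g_ninf gs)) lee_fin => le_seg.
rewrite ler_pdivrMr //; lra.
Unshelve. all: end_near.
Qed.

Lemma fine_cvg_within_edom {g x} :
  (forall z, g z != -oo%E) -> {within edom g, continuous g} -> edom g x ->
  fine (g z) @[z --> within (edom g) (nbhs x)] --> fine (g x).
Proof.
move=> g_ninf g_cont gx.
have : g z @[z --> within (edom g) (nbhs x)] --> g x := (subspace_continuousP _ _).1 g_cont x gx.
by rewrite -[in X in _ --> X](fineK (fin_num_edom g_ninf gx)); exact: fine_cvg.
Qed.

Lemma has_dir_deriv_bigmin (I : finType) (P : pred I) g (h : I -> 'rV[R]_n -> \bar R) x d j
    (l : I -> R) :
  P j -> (forall i, P i -> h i x = g x) ->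
  (forall i, P i -> has_dir_deriv (h i) x d (l i)) ->
  (\forall s \near 0^'+, forall i, P i -> h i (x + s *: d) \is a fin_num) ->
  (\forall s \near 0^'+,
     g (x + s *: d) = \big[Order.min/h j (x + s *: d)]_(i | P i) h i (x + s *: d)) ->
  has_dir_deriv g x d (\big[Order.min/l j]_(i | P i) l i).
Proof.
move=> Pj hx hl h_fin gE.
pose q i s := (fine (h i (x + s *: d)) - fine (g x)) / s.
have q_cvg i : P i -> q i @ 0^'+ --> l i by move=> Pi; rewrite /q -(hx i Pi); exact: hl.
apply: cvg_trans (cvg_bigmin (q_cvg j Pj) q_cvg); apply: near_eq_cvg; near=> s.
have s_gt0 : 0 < s by near: s; exact: nbhs_right_gt.
have h_fin_s : forall i, P i -> h i (x + s *: d) \is a fin_num by near: s.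
have -> : g (x + s *: d) =
    (\big[Order.min/fine (h j (x + s *: d))]_(i | P i) fine (h i (x + s *: d)))%:E.
  rewrite (near gE s) // (nondecreasing_bigmin (@EFin R)); last first.
    by move=> u v; rewrite lee_fin.
  by rewrite fineK ?h_fin_s //; apply: eq_bigr => i Pi; rewrite fineK ?h_fin_s.
rewrite /= (nondecreasing_bigmin (fun u => (u - fine (g x)) / s)) //.
by move=> u v uv; rewrite ler_pM2r ?invr_gt0 // lerD2r.
Unshelve. all: end_near.
Qed.

End ExtendedValued.

Definition active_feas {R : realType} {n M : nat} (f : 'I_M -> 'rV[R]_n -> \bar R)
    (x d : 'rV[R]_n) : pred 'I_M :=
  fun i => (f i x == emin_fam f x) && `[< feas_dir (edom (f i)) x d >].

Section EminFam.
Context {R : realType} {n M : nat} {f : 'I_M -> 'rV[R]_n -> \bar R}.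
Hypothesis f_neq_ninfty : forall i z, f i z != -oo%E.
Hypothesis f_convex : forall i, econvex (f i).
Hypothesis f_dir_diff : forall i, dir_differentiable (f i).
Hypothesis f_cont : forall i, {within edom (f i), continuous (f i)}.
Hypothesis edom_f_closed : forall i, closed (edom (f i)).
Hypothesis F_cont : {within edom (emin_fam f), continuous (emin_fam f)}.
Local Notation F := (emin_fam f).

Lemma emin_fam_le i z : (F z <= f i z)%E.
Proof. exact: bigmin_le. Qed.

Lemma emin_fam_neq_ninfty z : F z != -oo%E.
Proof. by apply: (big_ind (fun v => v != -oo%E)) => // a b; case: leP. Qed.

Lemma edom_emin_fam {i z} : edom (f i) z -> edom F z.
Proof. exact: le_lt_trans (emin_fam_le i z). Qed.

Lemma emin_fam_attained {z} : edom F z -> exists k, F z = f k z.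
Proof.
move=> /(@bigmin_ltP _ _ +oo%E _ predT +oo%E (fun i => f i z))[|[j _ _]].
  by rewrite ltxx.
have [k _ Fzk] := @eq_bigmin _ _ _ +oo%E j predT (fun i => f i z) erefl (fun i _ => leey _).
by exists k.
Qed.

Lemma emin_fam_lt_near {k} {x : 'rV[R]_n} : edom (f k) x -> (F x < f k x)%E ->
  \forall z \near x, edom (f k) z -> (F z < f k z)%E.
Proof.
move=> kx Fx_lt; have Fx := edom_emin_fam kx.
have fine_lt : fine (F x) < fine (f k x).
  by rewrite -lte_fin !fineK // ?fin_num_edom //; exact: emin_fam_neq_ninfty.
pose m := (fine (F x) + fine (f k x)) / 2.
have Fx_m : fine (F x) < m by rewrite /m; lra.
have m_kx : m < fine (f k x) by rewrite /m; lra.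
have near_k : \forall z \near x, edom (f k) z -> m < fine (f k z).
  exact: cvgr_gt _ (fine_cvg_within_edom (f_neq_ninfty k) (f_cont k) kx) m m_kx.
have near_F : \forall z \near x, edom F z -> fine (F z) < m.
  exact: cvgr_lt _ (fine_cvg_within_edom emin_fam_neq_ninfty F_cont Fx) m Fx_m.
apply: filterS (filterI near_k near_F) => z [kz_m Fz_m] kz; have Fz := edom_emin_fam kz.
rewrite -(fineK (fin_num_edom emin_fam_neq_ninfty Fz)).
rewrite -(fineK (fin_num_edom (f_neq_ninfty k) kz)) lte_fin.
exact: lt_trans (Fz_m Fz) (kz_m kz).
Qed.

Lemma emin_fam_active_near {x : 'rV[R]_n} : edom F x ->
  \forall z \near x, forall k, edom F z -> F z = f k z -> f k x = F x.
Proof.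
move=> Fx.
have near_k k : \forall z \near x, edom (f k) z -> f k x = F x \/ (F z < f k z)%E.
  have [kx|kx] := pselect (edom (f k) x); last first.
    have nkx : nbhs x (~` edom (f k)) by apply: open_nbhs_nbhs; split; [exact: closed_openC|].
    by apply: filterS nkx => z.
  have [kxE|kx_neq] := eqVneq (f k x) (F x); first by near=> z => _; left.
  have Fx_lt : (F x < f k x)%E by rewrite lt_neqAle eq_sym kx_neq emin_fam_le.
  by apply: filterS (emin_fam_lt_near kx Fx_lt) => z Fz_lt kz; right; exact: Fz_lt.
apply: filterS (filter_forall _ near_k) => z near_z k Fz Fzk.
have kz : edom (f k) z by rewrite /edom /= -Fzk.
by case: (near_z k kz) => //; rewrite Fzk ltxx.
Unshelve. all: end_near.
Qed.

Lemma active_feas_edom_near (x d : 'rV[R]_n) :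
  \forall s \near 0^'+, forall i, active_feas f x d i -> edom (f i) (x + s *: d).
Proof.
apply: filter_forall => i.
case: (boolP (active_feas f x d i)) => [|_]; last exact: nearW.
move=> /andP[_ /asboolP[_ [s' s'_gt0 feas]]].
near=> s => _; apply: feas.
by apply/andP; split; near: s; [exact: nbhs_right_gt | exact: nbhs_right_lt].
Unshelve. all: end_near.
Qed.

Lemma emin_fam_near_active_feas {x d : 'rV[R]_n} {j} : edom F x -> active_feas f x d j ->
  \forall s \near 0^'+,
    F (x + s *: d) = \big[Order.min/f j (x + s *: d)]_(i | active_feas f x d i) f i (x + s *: d).
Proof.
move=> Fx Aj.
have seg_cvg : (fun s : R => x + s *: d) @ 0^'+ --> x.
  apply: cvg_at_right_filter; rewrite -[X in _ --> X]addr0 -[X in x + X](scale0r d).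
  by apply: cvgD; [exact: cvg_cst | apply: cvgZ; [exact: cvg_id | exact: cvg_cst]].
have near_active := seg_cvg _ (emin_fam_active_near Fx).
near=> s.
have s_gt0 : 0 < s by near: s; exact: nbhs_right_gt.
have active_z : forall k, edom F (x + s *: d) -> F (x + s *: d) = f k (x + s *: d) -> f k x = F x.
  by near: s; exact: near_active.
have edom_z : forall i, active_feas f x d i -> edom (f i) (x + s *: d).
  by near: s; exact: active_feas_edom_near.
set z := x + s *: d in active_z edom_z *.
have Fz := edom_emin_fam (edom_z j Aj).
apply/eqP; rewrite eq_le; apply/andP; split.
  by apply: le_bigmin => [|i _]; exact: emin_fam_le.
have [k Fzk] := emin_fam_attained Fz.
have kx := active_z k Fz Fzk.
have Ak : active_feas f x d k.
  apply/andP; split; first exact/eqP.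
  apply/asboolP; apply: feas_dir_edom_convex s_gt0 _ _ => //.
  - by rewrite /edom /= kx.
  - by rewrite /edom /= -Fzk.
by rewrite Fzk; exact: bigmin_le_cond.
Unshelve. all: end_near.
Qed.

Lemma emin_fam_has_dir_deriv {x d : 'rV[R]_n} {j} : edom F x -> active_feas f x d j ->
  exists2 l, has_dir_deriv F x d l & exists2 lj, has_dir_deriv (f j) x d lj & l <= lj.
Proof.
move=> Fx Aj.
have /choice[lf lf_deriv] : forall i, exists l, active_feas f x d i -> has_dir_deriv (f i) x d l.
  move=> i; case: (boolP (active_feas f x d i)) => [/andP[_ /asboolP feas]|_]; last by exists 0.
  by have [l ?] := f_dir_diff i x d feas.1 feas; exists l.
exists (\big[Order.min/lf j]_(i | active_feas f x d i) lf i).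
  apply: has_dir_deriv_bigmin Aj _ lf_deriv _ (emin_fam_near_active_feas Fx Aj).
    by move=> i /andP[/eqP].
  apply: filterS (active_feas_edom_near x d) => s edom_s i Ai.
  exact: fin_num_edom (f_neq_ninfty i) (edom_s i Ai).
by exists (lf j); [exact: lf_deriv | exact: bigmin_le_id].
Qed.

End EminFam.

Theorem mainTheorem2 (R : realType) (n M : nat) (f : 'I_M -> 'rV[R]_n -> \bar R) :
  (forall i x, f i x != -oo%E) ->
  (forall i, econvex (f i)) ->
  (forall i, dir_differentiable (f i)) ->
  (forall i, {within edom (f i), continuous (f i)}) ->
  (forall i, closed (edom (f i))) ->
  {within edom (emin_fam f), continuous (emin_fam f)} ->
  forall x, edom (emin_fam f) x ->
  exists2 N : set 'rV[R]_n, nbhs x N &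
    forall y, N y -> edom (emin_fam f) y ->
      feas_dir (edom (emin_fam f)) x (y - x) /\
      exists l : R, has_dir_deriv (emin_fam f) x (y - x) l /\
        (emin_fam f y >= emin_fam f x + l%:E)%E.
Proof.
move=> f_ninf f_cvx f_dd f_cont f_closed F_cont x Fx.
exists [set z | forall k, edom (emin_fam f) z -> emin_fam f z = f k z -> f k x = emin_fam f x].
  exact: emin_fam_active_near.
move=> y active_y Fy; have [j Fyj] := emin_fam_attained Fy.
have jx : f j x = emin_fam f x := active_y j Fy Fyj.
have edom_jx : edom (f j) x by rewrite /edom /= jx.
have edom_jy : edom (f j) y by rewrite /edom /= -Fyj.
have feas_j : feas_dir (edom (f j)) x (y - x).
  by apply: feas_dir_edom_convex ltr01 _ _ => //; rewrite scale1r subrKC.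
split; first exact: feas_dir_sub (fun z => edom_emin_fam) feas_j.
have Aj : active_feas f x (y - x) j by rewrite /active_feas jx eqxx; exact/asboolP.
have [l Fl [lj jl l_lj]] := emin_fam_has_dir_deriv f_ninf f_cvx f_dd f_cont f_closed F_cont Fx Aj.
exists l; split => //.
have lj_le := has_dir_deriv_le_convex (f_ninf j) (f_cvx j) edom_jx edom_jy jl.
rewrite Fyj -jx -(fineK (fin_num_edom (f_ninf j) edom_jx)).
rewrite -(fineK (fin_num_edom (f_ninf j) edom_jy)) -EFinD lee_fin; lra.
Qed.
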